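(* Let $K$ be a skew field, and let $D=(y_i^k)_{i,k\ge0}$ be an infinite matrix over $K$ (entry $y_i^k$ in row $k$, column $i$) which is generic. For $n\ge0$ let $D_n$ be the $(n+1)\times(n+1)$ matrix with entry $y_i^k$ in row $k$, column $i$, $0\le i,k\le n$, and let $(z_k^i)_n$ denote the entry in row $i$, column $k$ of $D_n^{-1}$, so that $(z_k^i)_n=(|D_n|_i^k)^{-1}$. Then for $0\le i,k\le n$, $$(z_k^i)_n=\sum_{m=\max(i,k)}^n\big(|D_m|_i^m\big)^{-1}\,|D_m|_m^m\,\big(|D_m|_m^k\big)^{-1}.$$
   Context: Quasideterminants: for a square matrix $M$ over $K$ with rows and columns indexed by $\{0,\ldots,n\}$, let $M_a^b$ denote its entry in row $b$, column $a$; the quasideterminant $|M|_a^b=M_a^b-r\,(M^{(b,a)})^{-1}c$, where $M^{(b,a)}$ is $M$ with row $b$ and column $a$ deleted, $r$ is row $b$ of $M$ with its column-$a$ entry deleted, and $c$ is column $a$ of $M$ with its row-$b$ entry deleted (for a $1\times1$ matrix, $|M|_0^0=M_0^0$). When $M$ is invertible, $|M|_a^b$ is the inverse of the entry of $M^{-1}$ in row $a$, column $b$; in the commutative case $|M|_a^b=(-1)^{a+b}\det M/\det M^{(b,a)}$. Genericity means all matrices and quasideterminants appearing are defined and invertible. *)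

From HB Require Import structures.
From mathcomp Require Import all_boot all_order all_algebra.
From Stdlib Require Import ClassicalEpsilon.
Set Implicit Arguments. Unset Strict Implicit. Unset Printing Implicit Defensive.
Import GRing.Theory.
Local Open Scope ring_scope.

Definition skew_field (K : unitRingType) : Prop :=
  forall x : K, x != 0 -> x \is a GRing.unit.

Definition mx_inverse (K : unitRingType) n (M N : 'M[K]_n) : Prop :=
  M *m N = 1%:M /\ N *m M = 1%:M.

Definition mx_invertible (K : unitRingType) n (M : 'M[K]_n) : Prop :=
  exists N, mx_inverse M N.

(* The inverse (chosen; it is unique when it exists). *)
Definition mxinv (K : unitRingType) n (M : 'M[K]_n) : 'M[K]_n :=
  epsilon (inhabits 0) (fun N => mx_inverse M N).

Definition mxdel (K : unitRingType) n (M : 'M[K]_n.+1) (b a : 'I_n.+1) : 'M[K]_n :=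
  \matrix_(i, j) M (lift b i) (lift a j).

(* Quasideterminant |M|_a^b (a = column index, b = row index):
   M_a^b - r (M^{(b,a)})^{-1} c. *)
Definition qdet (K : unitRingType) n (M : 'M[K]_n.+1) (a b : 'I_n.+1) : K :=
  let r : 'rV[K]_n := \row_j M b (lift a j) in
  let c : 'cV[K]_n := \col_i M (lift b i) a in
  M b a - (r *m mxinv (mxdel M b a) *m c) 0 0.

(* D_n: entry D k i (= y_i^k) in row k, column i, for 0 <= i,k <= n. *)
Definition Dmx (K : unitRingType) (D : nat -> nat -> K) n : 'M[K]_n.+1 :=
  \matrix_(k < n.+1, i < n.+1) D k i.

Definition generic (K : unitRingType) (D : nat -> nat -> K) : Prop :=
  forall n, mx_invertible (Dmx D n) /\
    forall a b : 'I_n.+1,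
      mx_invertible (mxdel (Dmx D n) b a) /\ qdet (Dmx D n) a b \is a GRing.unit.

From mathcomp Require Import all_boot all_order all_algebra.
From mathcomp Require Import zify.
From Stdlib Require Import ClassicalEpsilon.
Set Implicit Arguments. Unset Strict Implicit. Unset Printing Implicit Defensive.
Import GRing.Theory.
Local Open Scope ring_scope.

(* Write z_m for the inverse of D_m.  The quasideterminant |D_m|_i^k is the
   inverse of the entry (z_k^i)_m.  Since
   D_m is D_(m+1) with its last row and column deleted, the block-inversion
   (Schur complement) formula gives
     (z_k^i)_m = (z_k^i)_(m+1) - (z_(m+1)^i)_(m+1) ((z_(m+1)^(m+1))_(m+1))^-1 (z_k^(m+1))_(m+1),
   and summing these differences from m = max(i,k) to n telescopes to the
   claimed expansion. *)

Lemma mxinvP (K : unitRingType) n (M : 'M[K]_n) :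
  mx_invertible M -> mx_inverse M (mxinv M).
Proof.
by move=> [N MN]; apply: (epsilon_spec (inhabits 0) (mx_inverse M)); exists N.
Qed.

Section Bordering.

Variables (K : unitRingType) (n : nat) (M Z : 'M[K]_n.+1) (a b : 'I_n.+1).
Hypothesis Z_rinv : M *m Z = 1%:M.

Local Notation minorM := (mxdel M b a).
Local Notation colM := (\col_i M (lift b i) a).
Local Notation rowM := (\row_j M b (lift a j)).
Local Notation minorZ := (\matrix_(i, j) Z (lift a i) (lift b j)).
Local Notation colZ := (\col_i Z (lift a i) b).
Local Notation rowZ := (\row_j Z a (lift b j)).

Lemma mxdel_mul_split (i : 'I_n) j :
  \sum_l minorM i l * Z (lift a l) j + M (lift b i) a * Z a j = (lift b i == j)%:R.
Proof.
have := congr1 (fun A : 'M[K]_n.+1 => A (lift b i) j) Z_rinv.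
rewrite !mxE (bigD1_ord a) //= addrC => <-; congr (_ + _).
by apply: eq_bigr => l _; rewrite mxE.
Qed.

Lemma mxdel_mul_col : minorM *m colZ = - (colM *m (Z a b)%:M).
Proof.
apply/matrixP => i k; rewrite ord1 !mxE big_ord1 !mxE eqxx mulr1n.
apply/eqP; rewrite -subr_eq0 opprK; apply/eqP.
have lift_neq : (lift b i == b)%:R = 0 :> K by rewrite eq_sym (negbTE (neq_lift _ _)).
rewrite -[RHS]lift_neq -mxdel_mul_split; congr (_ + _).
by apply: eq_bigr => l _; rewrite !mxE.
Qed.

Lemma mxdel_mul_minor : minorM *m minorZ = 1%:M - colM *m rowZ.
Proof.
apply/matrixP => i j; rewrite !mxE big_ord1 !mxE.
rewrite -(inj_eq (@lift_inj _ b)) -(mxdel_mul_split i (lift b j)) addrK.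
by apply: eq_bigr => l _; rewrite !mxE.
Qed.

Hypothesis minor_linv : mxinv minorM *m minorM = 1%:M.

Lemma qdet_mul_entry : qdet M a b * Z a b = 1.
Proof.
have colZ_def : colZ = - (mxinv minorM *m colM *m (Z a b)%:M).
  by rewrite -mulmxA -mulmxN -mxdel_mul_col mulmxA minor_linv mul1mx.
have := congr1 (fun A : 'M[K]_n.+1 => A b b) Z_rinv.
rewrite !mxE eqxx mulr1n (bigD1_ord a) //= => <-.
rewrite /qdet mulrBl; congr (_ + _).
have -> : (rowM *m mxinv minorM *m colM) 0 0 * Z a b =
          (rowM *m (mxinv minorM *m colM *m (Z a b)%:M)) 0 0.
  by rewrite !mulmxA [RHS]mxE big_ord1 !mxE eqxx mulr1n.
rewrite -[_ *m (Z a b)%:M]opprK -colZ_def mulmxN !mxE opprK.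
by apply: eq_bigr => l _; rewrite !mxE.
Qed.

(* The inverse of the minor is the Schur complement of the entry Z a b in Z. *)
Lemma mxinv_mxdel : Z a b \is a GRing.unit ->
  mxinv minorM = minorZ - colZ *m ((Z a b)^-1)%:M *m rowZ.
Proof.
move=> Zab_unit; apply/eqP; rewrite eq_sym subr_eq; apply/eqP.
have colM_def : colM = - (minorM *m colZ *m ((Z a b)^-1)%:M).
  by rewrite mxdel_mul_col mulNmx opprK -mulmxA -scalar_mxM divrr // mulmx1.
rewrite -[minorZ]mul1mx -minor_linv -[LHS]mulmxA mxdel_mul_minor mulmxBr mulmx1.
by rewrite colM_def mulNmx mulmxN opprK !mulmxA minor_linv mul1mx.
Qed.

End Bordering.

Lemma lift_max_inord m i :
  (i <= m)%N -> lift ord_max (inord i : 'I_m.+1) = inord i :> 'I_m.+2.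
Proof. by move=> im; apply: val_inj; rewrite /= /bump ltnNge !inordK //; lia. Qed.

Lemma bordered_expansion (K : unitRingType) (z : nat -> nat -> nat -> K) :
  (forall m, z m m m \is a GRing.unit) ->
  (forall m i k, (i <= m)%N -> (k <= m)%N ->
     z m i k = z m.+1 i k - z m.+1 i m.+1 * (z m.+1 m.+1 m.+1)^-1 * z m.+1 m.+1 k) ->
  forall n i k, (i <= n)%N -> (k <= n)%N ->
  z n i k = \sum_(maxn i k <= m < n.+1) z m i m * (z m m m)^-1 * z m m k.
Proof.
move=> z_unit z_border; elim=> [|n IH] i k hi hk.
  by move: hi hk; rewrite !leqn0 => /eqP-> /eqP->; rewrite big_nat1 divrK.
have [hm|hm] := leqP (maxn i k) n.
  have [hin hkn] : (i <= n)%N /\ (k <= n)%N by lia.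
  rewrite big_nat_recr /=; last by lia.
  by rewrite -IH // (z_border n i k) // subrK.
have -> : maxn i k = n.+1 by lia.
rewrite big_nat1; have [->|hin] := eqVneq i n.+1; first by rewrite divrr ?mul1r.
have -> : k = n.+1 by lia.
by rewrite divrK.
Qed.

Section GenericMatrix.

Variables (K : unitRingType) (D : nat -> nat -> K).
Hypothesis hD : generic D.

Lemma Dmx_mulV m : Dmx D m *m mxinv (Dmx D m) = 1%:M.
Proof. by have [/mxinvP []] := hD m. Qed.

Lemma qdet_Dmx m a b : qdet (Dmx D m) a b = (mxinv (Dmx D m) a b)^-1.
Proof.
have [_ /(_ a b) [/mxinvP [_ minor_linv] q_unit]] := hD m.
by rewrite -[mxinv _ a b](mulKr q_unit) (qdet_mul_entry (Dmx_mulV m) minor_linv)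
   mulr1 invrK.
Qed.

Lemma mxinv_Dmx_unit m a b : mxinv (Dmx D m) a b \is a GRing.unit.
Proof.
by rewrite -[mxinv _ a b]invrK -qdet_Dmx unitrV; have [_ /(_ a b) []] := hD m.
Qed.

Lemma mxdel_Dmx_max m : mxdel (Dmx D m.+1) ord_max ord_max = Dmx D m.
Proof. by apply/matrixP => i j; rewrite !mxE /= /bump !(leqNgt m.+1) !ltn_ord. Qed.

(* (z_k^i)_m in the notation of the statement, with natural-number indices. *)
Definition Dinv m i k : K := mxinv (Dmx D m) (inord i) (inord k).

Lemma Dinv_border m i k : (i <= m)%N -> (k <= m)%N ->
  Dinv m i k =
  Dinv m.+1 i k - Dinv m.+1 i m.+1 * (Dinv m.+1 m.+1 m.+1)^-1 * Dinv m.+1 m.+1 k.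
Proof.
move=> im km; have [/mxinvP [_ minor_linv] _] := hD m.
rewrite -mxdel_Dmx_max in minor_linv.
have := mxinv_mxdel (Dmx_mulV m.+1) minor_linv (mxinv_Dmx_unit ord_max ord_max).
move/(congr1 (fun A : 'M[K]_m.+1 => A (inord i) (inord k))).
rewrite mxdel_Dmx_max /Dinv => ->.
rewrite !mxE big_ord1 !mxE big_ord1 !mxE eqxx mulr1n !lift_max_inord //.
by have -> : ord_max = inord m.+1 :> 'I_m.+2 by apply: val_inj; rewrite /= inordK.
Qed.

End GenericMatrix.

Theorem theorem6 (K : unitRingType) (hK : skew_field K)
  (D : nat -> nat -> K) (hD : generic D) (n i k : nat)
  (hi : (i <= n)%N) (hk : (k <= n)%N) :
  mxinv (Dmx D n) (inord i) (inord k) =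
  \sum_(maxn i k <= m < n.+1)
     (qdet (Dmx D m) (inord i) (inord m))^-1 * qdet (Dmx D m) (inord m) (inord m)
       * (qdet (Dmx D m) (inord m) (inord k))^-1.
Proof.
under eq_bigr do rewrite !qdet_Dmx // !invrK.
exact: (bordered_expansion (z := Dinv D) (fun m => mxinv_Dmx_unit hD _ _)
          (Dinv_border hD) hi hk).
Qed.
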